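(* Let $s\ge2$ groups of positive integer moduli be given: Group $j$ ($1\le j\le s$) consists of $L_j\ge1$ moduli $0<M_{j,1}<\dots<M_{j,L_j}$; put $\delta_j=\operatorname{lcm}(M_{j,1},\dots,M_{j,L_j})$ and assume $\delta_1,\dots,\delta_s$ pairwise distinct. Let $N$ be an integer with $0\le N<\operatorname{lcm}(\delta_1,\dots,\delta_s)$, let $r_{j,i}$ be the remainder of $N$ modulo $M_{j,i}$ and $n_{j,i}=(N-r_{j,i})/M_{j,i}$. Let $G_j=\max_{1\le i\le L_j}\min_{q\ne i}\gcd(M_{j,i},M_{j,q})/4$ if $L_j\ge2$, $G_j=M_{j,1}/4$ if $L_j=1$, and let $k$ be an index with $$G:=\min_{q\ne k}\frac{\gcd(\delta_k,\delta_q)}{4}=\max_{1\le i\le s}\min_{q\ne i}\frac{\gcd(\delta_i,\delta_q)}{4}.$$ Let $\tilde r_{j,i}$ be integers with $0\le\tilde r_{j,i}\le M_{j,i}-1$ and $|\tilde r_{j,i}-r_{j,i}|\le\tau_j$, where $$\tau_k<\min(G_k,G),\qquad \tau_j<\min\Big(G_j,\ \frac{\gcd(\delta_j,\delta_k)}{2}-\min(G_k,G)\Big)\ \ (j\ne k).$$ Then the two-stage algorithm (described in the context) with stage-2 reference index $k$ outputs $\hat n_{j,i}=n_{j,i}$ for all $1\le i\le L_j$, $1\le j\le s$.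
   Context: For $x\in\mathbb R$, $[x]$ denotes the unique integer with $-1/2\le x-[x]<1/2$. Single-stage algorithm $\mathcal A$: for pairwise distinct positive integers $P_1,\dots,P_m$ ($m\ge2$), a reference index $k$ and integers $x_1,\dots,x_m$: for $i\ne k$ put $m_{ki}=\gcd(P_k,P_i)$, $\Gamma_{ki}=P_k/m_{ki}$, $\Gamma_{ik}=P_i/m_{ki}$, $\hat q_{ik}=[(x_i-x_k)/m_{ki}]$, let $\bar\Gamma_{ki}$ be an inverse of $\Gamma_{ki}$ modulo $\Gamma_{ik}$ and $\hat\xi_{ik}\equiv\hat q_{ik}\bar\Gamma_{ki}\pmod{\Gamma_{ik}}$, $0\le\hat\xi_{ik}<\Gamma_{ik}$; let $\hat n_k$ be the least nonnegative $y$ with $y\equiv\hat\xi_{ik}\pmod{\Gamma_{ik}}$ for all $i\ne k$ (the algorithm fails if none exists), and $\hat n_i=(\hat n_k\Gamma_{ki}-\hat q_{ik})/\Gamma_{ik}$ for $i\ne k$. Two-stage algorithm with stage-2 reference index $k$: Stage 1: for each group $j$, if $L_j\ge2$ apply $\mathcal A$ to $M_{j,1},\dots,M_{j,L_j}$ with inputs $\tilde r_{j,1},\dots,\tilde r_{j,L_j}$ and a reference index attaining $\max_i\min_{q\ne i}\gcd(M_{j,i},M_{j,q})$, obtaining $\hat K_{j,1},\dots,\hat K_{j,L_j}$; if $L_j=1$ set $\hat K_{j,1}=0$. Put $\hat N_j=[\frac1{L_j}\sum_{i=1}^{L_j}(\hat K_{j,i}M_{j,i}+\tilde r_{j,i})]$.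 Stage 2: apply $\mathcal A$ to $\delta_1,\dots,\delta_s$ with inputs $\hat N_1,\dots,\hat N_s$ and reference index $k$, obtaining $\hat l_1,\dots,\hat l_s$. Output $\hat n_{j,i}=\hat l_j\delta_j/M_{j,i}+\hat K_{j,i}$. *)

From mathcomp Require Import all_boot all_order all_algebra.
Set Implicit Arguments. Unset Strict Implicit. Unset Printing Implicit Defensive.
Import Order.TTheory GRing.Theory Num.Theory.
Local Open Scope ring_scope.

(* [a / d] for d > 0 : the unique integer z with -1/2 <= a/d - z < 1/2,
   i.e. floor(a/d + 1/2) = floor((2a + d) / (2d)). *)
Definition rnd (a : int) (d : nat) : int := divz (2 * a + d%:Z) (2 * d)%:Z.

Definition lcml (s : seq nat) : nat := foldr lcmn 1%N s.

(* min_{q != i} gcd(P_i, P_q)  (meaningful when size P >= 2 and P positive;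
   the identity element P_i is >= every gcd(P_i,P_q) when P_i > 0) *)
Definition minG (P : seq nat) (i : nat) : nat :=
  \big[minn/(nth 0%N P i)]_(q < size P | q != i :> nat) gcdn (nth 0%N P i) (nth 0%N P q).

Definition maxmin (P : seq nat) : nat := \max_(i < size P) minG P i.

Section AlgA.
Variables (P : seq nat) (k : nat) (x : seq int).
Definition mki (i : nat) : nat := gcdn (nth 0%N P k) (nth 0%N P i).
Definition Gki (i : nat) : nat := ((nth 0%N P k) %/ mki i)%N.
Definition Gik (i : nat) : nat := ((nth 0%N P i) %/ mki i)%N.
Definition qhat (i : nat) : int := rnd (x`_i - x`_k) (mki i).
(* an inverse of Gki modulo Gik, from the Bezout coefficients *)
Definition barG (i : nat) : int := (egcdz (Gki i)%:Z (Gik i)%:Z).1.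
Definition xihat (i : nat) : int := modz (qhat i * barG i) (Gik i)%:Z.
Definition others : seq nat := [seq i <- iota 0 (size P) | i != k].
Definition congr_ok (y : nat) : bool :=
  all (fun i => modz y%:Z (Gik i)%:Z == modz (xihat i) (Gik i)%:Z) others.
(* every solution is congruent to one in [0, lcm_i Gik), so the least
   nonnegative solution, if any, lies below this bound *)
Definition bound : nat := foldr (fun i acc => lcmn (Gik i) acc) 1%N others.
Definition nkhat : nat := find congr_ok (iota 0 bound).
Definition algA : option (seq int) :=
  if (nkhat < bound)%N then
    Some [seq (if i == k then nkhat%:Z
               else divz (nkhat%:Z * (Gki i)%:Z - qhat i) (Gik i)%:Z)
         | i <- iota 0 (size P)]
  else None.
End AlgA.

(* group data: M is a list of s groups, group j is the list M_j of moduli *)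
Definition delta (M : seq (seq nat)) : seq nat := map lcml M.

(* 4 * G_j *)
Definition G4 (Mj : seq nat) : nat :=
  if (2 <= size Mj)%N then maxmin Mj else (nth 0%N Mj 0).

Definition stage1 (M : seq (seq nat)) (rt : nat -> nat -> nat)
    (ref : nat -> nat) (j : nat) : option (seq int) :=
  let Mj := nth [::] M j in
  if (2 <= size Mj)%N then
    algA Mj (ref j) [seq (rt j i)%:Z | i <- iota 0 (size Mj)]
  else Some [:: 0].

Definition Nhat (Mj : seq nat) (rtj : nat -> nat) (K : seq int) : int :=
  rnd (\sum_(i < size Mj) (K`_i * ((nth 0%N Mj i))%:Z + (rtj i)%:Z)) (size Mj).

Definition twostage (M : seq (seq nat)) (rt : nat -> nat -> nat)
    (ref : nat -> nat) (k : nat) : option (seq (seq int)) :=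
  let Ks := [seq stage1 M rt ref j | j <- iota 0 (size M)] in
  if all (fun o => o != None) Ks then
    let K := [seq odflt [::] o | o <- Ks] in
    let Nh := [seq Nhat (nth [::] M j) (rt j) (nth [::] K j)
              | j <- iota 0 (size M)] in
    match algA (delta M) k Nh with
    | Some l =>
        Some [seq [seq l`_j * (((nth 0%N (delta M) j) %/ (nth 0%N (nth [::] M j) i))%N)%:Z
                        + (nth [::] K j)`_i
                  | i <- iota 0 (size (nth [::] M j))]
             | j <- iota 0 (size M)]
    | None => None
    end
  else None.

From mathcomp Require Import all_boot all_order all_algebra.
From mathcomp Require Import zify ring lra.
Set Implicit Arguments. Unset Strict Implicit. Unset Printing Implicit Defensive.
Import Order.TTheory GRing.Theory Num.Theory.
Local Open Scope ring_scope.

(* Algorithm A is exact once every difference of residue errors is below half the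
   corresponding gcd m_ki: rounding then returns the exact quotient differences
   qhat_i = n_k Gamma_ki - n_i Gamma_ik, so n_k solves every congruence, and it is the
   least nonnegative solution because the solutions form one class modulo
   lcm_i Gamma_ik, which exceeds n_k since N < lcm P.
   In group j the errors differ by at most 2 tau_j < G_j / 2, so stage 1 returns the
   quotients of N mod delta_j; each of the L_j reconstructions of N mod delta_j is off by
   at most tau_j, hence so is their rounded mean. Stage 2 is A on the delta_j with
   2 tau_j + 2 tau_k < gcd (delta_j, delta_k), so it returns N div delta_j, and
   N div M_ji = (N div delta_j) (delta_j / M_ji) + (N mod delta_j) div M_ji. *)

Lemma rnd_addMl (q d : int) (m : nat) : (0 < m)%N ->
  rnd (q * m%:Z + d) m = q + rnd d m.
Proof.
move=> m_gt0; rewrite /rnd.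
have -> : 2 * (q * m%:Z + d) + m%:Z = q * (2 * m)%N%:Z + (2 * d + m%:Z).
  by rewrite PoszM; ring.
by rewrite divzMDl // eqz_nat; lia.
Qed.

Lemma rnd_small (d : int) (m : nat) : 2 * `|d| < m%:Z -> rnd d m = 0.
Proof.
move=> hd; rewrite /rnd divz_small //; apply/andP; split;
  rewrite ?/absz; move: hd; case: (ler0P d) => hd0 hd; lia.
Qed.

Lemma rnd_exact (q d : int) (m : nat) : 2 * `|d| < m%:Z ->
  rnd (q * m%:Z + d) m = q.
Proof.
move=> hd; rewrite rnd_addMl ?rnd_small ?addr0 //.
by move: hd; rewrite -ltz_nat; lia.
Qed.

Lemma rnd_sum_le (R : realFieldType) (L : nat) (e : 'I_L -> int) (t : R) :
  (0 < L)%N -> (forall i, `|(e i)%:~R| <= t) ->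
  `|(rnd (\sum_i e i) L)%:~R| <= t.
Proof.
move=> L_gt0 he; set S := \sum_i e i; set E := rnd S L.
have L2_gt0 : 0 < (2 * L)%N%:Z by rewrite ltz_nat; lia.
have lo := lez_floor (2 * S + L%:Z) (lt0r_neq0 L2_gt0).
have hi := ltz_ceil (2 * S + L%:Z) L2_gt0.
rewrite -/(rnd S L) -/E in lo hi.
have sum_const (c : int) : \sum_(i < L) c = L%:Z * c.
  by rewrite sumr_const card_ord -mulr_natl natz.
rewrite ler_norml; apply/andP; split.
- case: (lerP (- t) E%:~R) => // ltE; exfalso.
  have : L%:Z * (E + 1) <= S.
    rewrite -sum_const; apply: ler_sum => i _.
    have := he i; rewrite ler_norml => /andP [hei _].
    have : E%:~R < (e i)%:~R :> R by apply: lt_le_trans hei.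
    by rewrite ltr_int; lia.
  nia.
- case: (lerP E%:~R t) => // ltE; exfalso.
  have : S <= L%:Z * (E - 1).
    rewrite -sum_const; apply: ler_sum => i _.
    have := he i; rewrite ler_norml => /andP [_ hei].
    have : (e i)%:~R < E%:~R :> R by apply: le_lt_trans hei ltE.
    by rewrite ltr_int; lia.
  nia.
Qed.

Lemma lcml_dvdE (s : seq nat) (c : nat) :
  (lcml s %| c)%N = all (fun m => m %| c)%N s.
Proof. by elim: s => [|a s IH] /=; rewrite ?dvd1n // dvdn_lcm IH. Qed.

Lemma dvdn_lcml_mem (s : seq nat) m : m \in s -> (m %| lcml s)%N.
Proof. by move=> ms; move: (dvdnn (lcml s)); rewrite lcml_dvdE => /allP; apply. Qed.

Lemma lcml_gt0 (s : seq nat) : all (fun m => 0 < m)%N s -> (0 < lcml s)%N.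
Proof. by elim: s => [|a s IH] //= /andP [a_gt0 /IH]; rewrite lcmn_gt0 a_gt0. Qed.

Lemma eqn_mod_lcml (s : seq nat) (y z : nat) :
  (y == z %[mod lcml s]) = all (fun m => y == z %[mod m]) s.
Proof.
wlog yz : y z / (z <= y)%N => [hw|].
  case: (leqP z y) => [/hw // | /ltnW zy].
  by rewrite eq_sym hw //; apply: eq_all => m; rewrite eq_sym.
by rewrite eqn_mod_dvd // lcml_dvdE; apply: eq_all => m; rewrite eqn_mod_dvd.
Qed.

Lemma find_eqn_mod_iota (B z : nat) : (z < B)%N ->
  find (fun y => y == z %[mod B]) (iota 0 B) = z.
Proof.
move=> zB; rewrite -[RHS](index_uniq 0 _ (iota_uniq 0 B)) ?size_iota // nth_iota //.
apply: eq_in_find => y; rewrite mem_iota /= => yB.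
by rewrite !modn_small.
Qed.

Lemma coprime_divn_gcd (a b : nat) : (0 < gcdn a b)%N ->
  coprime (a %/ gcdn a b) (b %/ gcdn a b).
Proof.
move=> g_gt0; rewrite /coprime -(eqn_pmul2r g_gt0) mul1n muln_gcdl.
by rewrite !divnK ?dvdn_gcdl ?dvdn_gcdr.
Qed.

Lemma xihat_modE P k x i (n1 n2 : nat) : (0 < mki P k i)%N ->
  qhat P k x i = (n1 * Gki P k i)%N%:Z - (n2 * Gik P k i)%N%:Z ->
  modz (xihat P k x i) (Gik P k i)%:Z = modz n1%:Z (Gik P k i)%:Z.
Proof.
move=> m_gt0 hq; rewrite /xihat modz_mod /barG.
case: egcdzP => u v + _.
have /eqP coG := coprime_divn_gcd m_gt0.
rewrite /gcdz /= /Gki /Gik -/(mki P k i) coG => bezout.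
rewrite hq !PoszM.
have -> : (n1%:Z * (Gki P k i)%:Z - n2%:Z * (Gik P k i)%:Z) * u
    = (- n1%:Z * v - n2%:Z * u) * (Gik P k i)%:Z
      + n1%:Z * (u * (Gki P k i)%:Z + v * (Gik P k i)%:Z) by ring.
by rewrite bezout mulr1 modzMDl.
Qed.

Lemma boundE P k : bound P k = lcml [seq Gik P k i | i <- others P k].
Proof. by rewrite /lcml foldr_map. Qed.

Section SingleStage.
Variables (P : seq nat) (k : nat) (x : seq int) (X : nat).
Hypotheses (P_pos : all (fun m => 0 < m)%N P) (k_lt : (k < size P)%N).
Local Notation p := (nth 0%N P).

Lemma nth_gt0 i : (i < size P)%N -> (0 < p i)%N.
Proof. by move=> iP; apply: (allP P_pos); apply: mem_nth. Qed.

Lemma mki_gt0 i : (0 < mki P k i)%N.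
Proof. by rewrite gcdn_gt0 nth_gt0. Qed.

Lemma Gki_mki i : (Gki P k i * mki P k i)%N = p k.
Proof. by rewrite divnK ?dvdn_gcdl. Qed.

Lemma Gik_mki i : (Gik P k i * mki P k i)%N = p i.
Proof. by rewrite divnK ?dvdn_gcdr. Qed.

Lemma Gik_gt0 i : (i < size P)%N -> (0 < Gik P k i)%N.
Proof. by move=> /nth_gt0; rewrite -Gik_mki muln_gt0 => /andP []. Qed.

Lemma lcml_dvdn_mul_bound : (lcml P %| p k * bound P k)%N.
Proof.
rewrite lcml_dvdE; apply/allP => _ /(nthP 0%N) [i iP <-].
have [-> | ik] := eqVneq i k; first exact: dvdn_mulr.
rewrite -(Gik_mki i) mulnC dvdn_mul ?dvdn_gcdl // boundE dvdn_lcml_mem //.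
by apply: map_f; rewrite mem_filter mem_iota ik iP.
Qed.

Hypothesis X_lt : (X < lcml P)%N.

Lemma quot_lt_bound : (X %/ p k < bound P k)%N.
Proof.
rewrite ltn_divLR ?nth_gt0 // mulnC; apply: leq_trans X_lt _.
by apply: dvdn_leq lcml_dvdn_mul_bound; rewrite muln_gt0 nth_gt0 // boundE lcml_gt0 // all_map;
  apply/allP => i; rewrite mem_filter mem_iota => /andP [_ /= iP]; apply: Gik_gt0.
Qed.

Hypothesis x_err : forall i, (i < size P)%N -> i != k ->
  2 * `|(x`_i - (X %% p i)%N%:Z) - (x`_k - (X %% p k)%N%:Z)| < (gcdn (p k) (p i))%:Z.

Lemma qhat_exact i : (i < size P)%N -> i != k ->
  qhat P k x i = (X %/ p k * Gki P k i)%N%:Z - (X %/ p i * Gik P k i)%N%:Z.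
Proof.
move=> iP ik; rewrite /qhat -[RHS](rnd_exact _ (x_err iP ik)).
congr rnd.
rewrite -/(mki P k i) mulrBl -!PoszM -!mulnA Gki_mki Gik_mki.
by move: (divn_eq X (p i)) (divn_eq X (p k)); lia.
Qed.

Lemma congr_okE y : congr_ok P k x y = (y == X %/ p k %[mod bound P k]).
Proof.
rewrite /congr_ok boundE eqn_mod_lcml all_map; apply: eq_in_all => i.
rewrite mem_filter mem_iota add0n => /andP [ik /andP [_ iP]] /=.
by rewrite (xihat_modE (mki_gt0 i) (qhat_exact iP ik)) !modz_nat eqz_nat.
Qed.

Lemma nkhat_exact : nkhat P k x = (X %/ p k)%N.
Proof. by rewrite /nkhat (eq_find congr_okE) find_eqn_mod_iota // quot_lt_bound. Qed.

Lemma algA_exact :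
  algA P k x = Some [seq (X %/ p i)%N%:Z | i <- iota 0 (size P)].
Proof.
rewrite /algA nkhat_exact quot_lt_bound; congr Some.
apply/eq_in_map => i; rewrite mem_iota add0n => /andP [_ iP].
have [-> // | ik] := eqVneq i k.
rewrite qhat_exact // opprB addrC subrK PoszM mulzK //.
by rewrite eqz_nat -lt0n Gik_gt0.
Qed.

End SingleStage.

Lemma minG_le (P : seq nat) i q : q != i -> (q < size P)%N ->
  (minG P i <= gcdn (nth 0%N P i) (nth 0%N P q))%N.
Proof.
move=> qi qP; rewrite /minG -minEnat.
exact: (@bigmin_le_cond _ _ _ _ (Ordinal qP) (fun q : 'I_(size P) => q != i :> nat)
   (fun q : 'I_(size P) => gcdn (nth 0%N P i) (nth 0%N P q))).
Qed.

Lemma twice_normB_lt (R : realFieldType) (a b : int) (ta tb : R) (g : nat) :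
  `|a%:~R| <= ta -> `|b%:~R| <= tb -> 2 * ta + 2 * tb < g%:R ->
  2 * `|a - b| < g%:Z.
Proof.
move=> ha hb hg; rewrite -(ltr_int R) intrM intr_norm intrB.
have := ler_normB (a%:~R : R) b%:~R.
change (g%:Z%:~R) with (g%:R : R); change ((2 : int)%:~R) with (2 : R); lra.
Qed.

Lemma Nhat_near (R : realFieldType) (Mj : seq nat) (rtj : nat -> nat) (t : R) (Y : nat) :
  (0 < size Mj)%N ->
  (forall i, (i < size Mj)%N -> `|(rtj i)%:R - (Y %% nth 0%N Mj i)%N%:R| <= t) ->
  `|(Nhat Mj rtj [seq (Y %/ nth 0%N Mj i)%N%:Z | i <- iota 0 (size Mj)] - Y%:Z)%:~R| <= t.
Proof.
move=> L_gt0 rtj_err; rewrite /Nhat; set L := size Mj.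
have sumY : \sum_(i < L) Y%:Z = Y%:Z * L%:Z.
  by rewrite sumr_const card_ord -mulr_natr natz.
rewrite (_ : \sum_(i < L) _ = Y%:Z * L%:Z
    + \sum_(i < L) ((rtj i)%:Z - (Y %% nth 0%N Mj i)%N%:Z)); last first.
  rewrite -sumY -big_split; apply: eq_bigr => i _ /=.
  rewrite (nth_map 0%N) ?size_iota // nth_iota // add0n.
  by move: (divn_eq Y (nth 0%N Mj i)); lia.
rewrite rnd_addMl // addrC addKr; apply: rnd_sum_le => // i.
by rewrite intrB; apply: rtj_err.
Qed.

Definition local_quotients (Mj : seq nat) (N : nat) : seq int :=
  [seq ((N %% lcml Mj) %/ nth 0%N Mj i)%N%:Z | i <- iota 0 (size Mj)].

Lemma twostage_stage1 M rt ref k (K : nat -> seq int) :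
  (forall j, (j < size M)%N -> stage1 M rt ref j = Some (K j)) ->
  twostage M rt ref k =
    omap (fun l => [seq [seq l`_j * ((nth 0%N (delta M) j) %/ (nth 0%N (nth [::] M j) i))%N%:Z
                             + (K j)`_i
                         | i <- iota 0 (size (nth [::] M j))]
                   | j <- iota 0 (size M)])
      (algA (delta M) k [seq Nhat (nth [::] M j) (rt j) (K j) | j <- iota 0 (size M)]).
Proof.
move=> stage1E; rewrite /twostage.
have -> : [seq stage1 M rt ref j | j <- iota 0 (size M)] = [seq Some (K j) | j <- iota 0 (size M)].
  by apply/eq_in_map => j; rewrite mem_iota => /andP [_ /stage1E].
rewrite all_map (@eq_all _ _ predT) ?all_predT // -map_comp /=.
set Ks := map (_ \o _) _.
have KsE j : (j < size M)%N -> nth [::] Ks j = K j.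
  by move=> jM; rewrite (nth_map 0%N) ?size_iota // nth_iota.
have -> : [seq Nhat (nth [::] M j) (rt j) (nth [::] Ks j) | j <- iota 0 (size M)]
    = [seq Nhat (nth [::] M j) (rt j) (K j) | j <- iota 0 (size M)].
  by apply/eq_in_map => j; rewrite mem_iota => /andP [_ /KsE ->].
case: algA => [l|] //=; congr Some; apply/eq_in_map => j.
by rewrite mem_iota => /andP [_ /KsE ->].
Qed.

Lemma divn_split (n d m : nat) : (0 < m)%N -> (m %| d)%N ->
  (n %/ m = n %/ d * (d %/ m) + (n %% d) %/ m)%N.
Proof. by move=> m_gt0 md; rewrite {1}(divn_eq n d) -{2}(divnK md) mulnA divnMDl. Qed.

Section TwoStage.
Variables (R : realFieldType) (M : seq (seq nat)) (N : nat)
  (rt : nat -> nat -> nat) (tau : nat -> R) (ref : nat -> nat).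
Hypothesis M_pos : forall j, (j < size M)%N -> all (fun m => 0 < m)%N (nth [::] M j).
Hypothesis M_nonempty : forall j, (j < size M)%N -> (0 < size (nth [::] M j))%N.
Hypothesis rt_err : forall j i, (j < size M)%N -> (i < size (nth [::] M j))%N ->
  `|(rt j i)%:R - (N %% nth 0%N (nth [::] M j) i)%:R| <= tau j.

Lemma delta_nth j : (j < size M)%N -> nth 0%N (delta M) j = lcml (nth [::] M j).
Proof. by move=> jM; rewrite (nth_map [::]). Qed.

Lemma rt_err_local j i : (j < size M)%N -> (i < size (nth [::] M j))%N ->
  `|(rt j i)%:R - ((N %% lcml (nth [::] M j)) %% nth 0%N (nth [::] M j) i)%N%:R| <= tau j.
Proof. by move=> jM iMj; rewrite modn_dvdm ?dvdn_lcml_mem ?mem_nth //; apply: rt_err. Qed.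

Lemma stage1_exact j : (j < size M)%N ->
  ((2 <= size (nth [::] M j))%N ->
     (ref j < size (nth [::] M j))%N /\ minG (nth [::] M j) (ref j) = maxmin (nth [::] M j)) ->
  4 * tau j < (G4 (nth [::] M j))%:R ->
  stage1 M rt ref j = Some (local_quotients (nth [::] M j) N).
Proof.
move=> jM href tau_lt; rewrite /stage1.
have [L_ge2 | ] := leqP 2 (size (nth [::] M j)).
- have [ref_lt ref_opt] := href L_ge2.
  apply: algA_exact; [exact: M_pos | exact: ref_lt | |].
    by rewrite ltn_pmod // lcml_gt0 // M_pos.
  move=> i iMj i_ref; rewrite !(nth_map 0%N) ?size_iota // !nth_iota // !add0n.
  apply: (@twice_normB_lt R _ _ (tau j) (tau j)); rewrite ?intrB ?rt_err_local //.
  have := minG_le i_ref iMj; rewrite -(ler_nat R); move: tau_lt.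
  by rewrite /G4 L_ge2 -ref_opt; lra.
- move: (M_pos jM) (M_nonempty jM); rewrite /local_quotients.
  case: (nth [::] M j) => [|m [|? ?]] //= /andP [m_gt0 _] _ _.
  by rewrite lcmn1 divn_small // ltn_pmod.
Qed.

Lemma stage2_exact k : (k < size M)%N -> (N < lcml (delta M))%N ->
  (forall j, (j < size M)%N -> j != k ->
     2 * tau j + 2 * tau k < (gcdn (nth 0%N (delta M) k) (nth 0%N (delta M) j))%:R) ->
  algA (delta M) k
    [seq Nhat (nth [::] M j) (rt j) (local_quotients (nth [::] M j) N) | j <- iota 0 (size M)]
  = Some [seq (N %/ nth 0%N (delta M) j)%N%:Z | j <- iota 0 (size (delta M))].
Proof.
move=> kM N_lt tau_lt; apply: algA_exact; [ | by rewrite size_map | exact: N_lt | ].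
  rewrite /delta all_map; apply/allP => _ /(nthP [::]) [j jM <-] /=.
  exact: lcml_gt0 (M_pos jM).
move=> j; rewrite size_map => jM jk.
rewrite !(nth_map 0%N) ?size_iota // !nth_iota // !add0n /local_quotients.
apply: (@twice_normB_lt R _ _ (tau j) (tau k)); rewrite ?tau_lt //;
  rewrite delta_nth //; apply: Nhat_near => [|i]; by [apply: M_nonempty | apply: rt_err_local].
Qed.

Lemma recombine_exact :
  [seq [seq [seq (N %/ nth 0%N (delta M) j)%N%:Z | j <- iota 0 (size (delta M))]`_j
              * ((nth 0%N (delta M) j) %/ (nth 0%N (nth [::] M j) i))%N%:Z
            + (local_quotients (nth [::] M j) N)`_i
        | i <- iota 0 (size (nth [::] M j))]
   | j <- iota 0 (size M)]
  = [seq [seq (N %/ m)%:Z | m <- Mj] | Mj <- M].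
Proof.
rewrite -[in RHS](mkseq_nth [::] M) /mkseq -map_comp.
apply/eq_in_map => j; rewrite mem_iota add0n => /andP [_ jM] /=.
rewrite -[in RHS](mkseq_nth 0%N (nth [::] M j)) /mkseq -map_comp.
apply/eq_in_map => i; rewrite mem_iota add0n => /andP [_ iMj] /=.
rewrite (nth_map 0%N) ?size_iota ?size_map // nth_iota // add0n.
rewrite (nth_map 0%N) ?size_iota // nth_iota // add0n delta_nth //.
have m_gt0 : (0 < nth 0%N (nth [::] M j) i)%N by apply: (allP (M_pos jM)); apply: mem_nth.
by rewrite (divn_split N m_gt0 (dvdn_lcml_mem (mem_nth 0%N iMj))) PoszD PoszM.
Qed.

End TwoStage.

Theorem corollary5 (R : realFieldType) (M : seq (seq nat)) (N : nat)
    (rt : nat -> nat -> nat) (tau : nat -> R) (ref : nat -> nat) (k : nat) :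
  (2 <= size M)%N ->
  (forall j, (j < size M)%N -> (1 <= size (nth [::] M j))%N) ->
  (forall j, (j < size M)%N ->
     sorted ltn (nth [::] M j) /\ all (fun m => 0 < m)%N (nth [::] M j)) ->
  uniq (delta M) ->
  (N < lcml (delta M))%N ->
  (forall j, (j < size M)%N -> (2 <= size (nth [::] M j))%N ->
     (ref j < size (nth [::] M j))%N /\
     minG (nth [::] M j) (ref j) = maxmin (nth [::] M j)) ->
  (k < size M)%N ->
  minG (delta M) k = maxmin (delta M) ->
  (forall j i, (j < size M)%N -> (i < size (nth [::] M j))%N ->
     (rt j i <= (nth 0%N (nth [::] M j) i) - 1)%N /\
     `|(rt j i)%:R - (N %% (nth 0%N (nth [::] M j) i))%:R| <= tau j) ->
  4 * tau k < Num.min (G4 (nth [::] M k))%:R (maxmin (delta M))%:R ->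
  (forall j, (j < size M)%N -> j != k ->
     4 * tau j < Num.min (G4 (nth [::] M j))%:R
       (2 * (gcdn (nth 0%N (delta M) j) (nth 0%N (delta M) k))%:R
        - Num.min (G4 (nth [::] M k))%:R (maxmin (delta M))%:R)) ->
  twostage M rt ref k = Some [seq [seq (N %/ m)%:Z | m <- Mj] | Mj <- M].
Proof.
move=> _ M_nonempty M_sorted_pos _ N_lt href kM _ rt_ok tau_k tau_j.
have M_pos j : (j < size M)%N -> all (fun m => 0 < m)%N (nth [::] M j).
  by move=> /M_sorted_pos [].
have rt_err j i jM iMj := (rt_ok j i jM iMj).2.
have tau_G4 j : (j < size M)%N -> 4 * tau j < (G4 (nth [::] M j))%:R.
  move=> jM; have [-> | jk] := eqVneq j k; first by move: tau_k; rewrite lt_min => /andP [].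
  by move: (tau_j j jM jk); rewrite lt_min => /andP [].
rewrite (@twostage_stage1 _ _ _ k (fun j => local_quotients (nth [::] M j) N)); last first.
  by move=> j jM; apply: (stage1_exact M_pos M_nonempty rt_err) => //; [apply: href | apply: tau_G4].
rewrite (stage2_exact M_pos M_nonempty rt_err) //=; first by rewrite (recombine_exact N M_pos).
by move=> j jM jk; move: (tau_j j jM jk) tau_k; rewrite gcdnC lt_min => /andP [_]; lra.
Qed.
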